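(* Fix $p\in[1,\infty]$ and write $\|\cdot\|$ for the $\ell_p$ norm on vectors and the induced $\ell_p\to\ell_p$ operator norm on matrices. Let $f:\mathbb{R}^{n_0}\to\mathbb{R}^{n_L}$ be the $L$-layer network defined by $a^{(0)}(x)=x$, $z^{(l)}(x)=W^{(l)}a^{(l-1)}(x)$ and $a^{(l)}(x)=\sigma^{(l)}(z^{(l)}(x))$ for $l=1,\dots,L-1$, and $f(x)=z^{(L)}(x)=W^{(L)}a^{(L-1)}(x)$, where $W^{(l)}\in\mathbb{R}^{n_l\times n_{l-1}}$ and $\sigma^{(l)}(z)=(\sigma^{(l)}_1(z_1),\dots,\sigma^{(l)}_{n_l}(z_{n_l}))$. Suppose each $\sigma^{(l)}_i$ is slope-restricted in $[\alpha^{(l)}_i,\beta^{(l)}_i]$ with $0\le\alpha^{(l)}_i\le\beta^{(l)}_i<\infty$. For $l=1,\dots,L-1$ let $d^{(l)}\in\mathbb{R}^{n_l}$ satisfy $0\le d^{(l)}_i\le\frac{\alpha^{(l)}_i+\beta^{(l)}_i}{2}$ for all $i$, and set $D^{(l)}=\mathrm{diag}(d^{(l)})$ and $D'^{(l)}=\mathrm{diag}(\beta^{(l)}-d^{(l)})$; set $D'^{(L)}=I$. Define $y^{(l)}(x)=D'^{(l)}z^{(l)}(x)$ for $l=1,\dots,L$. Define $m^{(1)}=\|D'^{(1)}W^{(1)}\|$ and, for $l=2,\dots,L$, $$m^{(l)}=\Big\|D'^{(l)}W^{(l)}\prod_{i=1}^{l-1}D^{(i)}W^{(i)}\Big\|+\sum_{j=1}^{l-1}\Big\|D'^{(l)}W^{(l)}\prod_{i=j+1}^{l-1}D^{(i)}W^{(i)}\Big\|\,m^{(j)},$$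 where $\prod_{i=a}^{b}D^{(i)}W^{(i)}=D^{(b)}W^{(b)}\cdots D^{(a)}W^{(a)}$ and the empty product is the identity. Then for each $l=1,\dots,L$, $m^{(l)}$ is a Lipschitz constant (in $\ell_p$) of the map $x\mapsto y^{(l)}(x)$. In particular, $m^{(L)}$ is a Lipschitz constant of $x\mapsto f(x)$.
   Context: A function $\sigma:\mathbb{R}\to\mathbb{R}$ is slope-restricted in $[\alpha,\beta]$ if $\alpha\le\frac{\sigma(x)-\sigma(y)}{x-y}\le\beta$ for all $x\ne y$. A Lipschitz constant $m$ of $g$ in $\ell_p$ means $\|g(x)-g(x')\|_p\le m\|x-x'\|_p$ for all $x,x'$. *)

From mathcomp Require Import all_boot all_order all_algebra.
From mathcomp Require Import all_classical all_reals all_analysis.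
Set Implicit Arguments. Unset Strict Implicit. Unset Printing Implicit Defensive.
Import Order.TTheory GRing.Theory Num.Theory.
Local Open Scope ring_scope.
Local Open Scope classical_set_scope.

Section Defs.
Variable R : realType.

Definition lpnorm (p : \bar R) (k : nat) (v : 'cV[R]_k) : R :=
  match p with
  | +oo%E => \big[Num.max/0]_(i < k) `|v i 0|
  | EFin r => (\sum_(i < k) `|v i 0| `^ r) `^ (r^-1)
  | -oo%E => 0
  end.

Definition opnorm (p : \bar R) (a b : nat) (A : 'M[R]_(a, b)) : R :=
  sup [set lpnorm p (A *m v) | v in [set v : 'cV[R]_b | lpnorm p v <= 1]].

Definition slope_restricted (s : R -> R) (al be : R) : Prop :=
  forall x y : R, x != y -> al <= (s x - s y) / (x - y) <= be.

Variables (n : nat -> nat) (W : forall l, 'M[R]_(n l, n l.-1))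
          (sigma : forall l, 'I_(n l) -> R -> R).

Definition act (l : nat) (v : 'cV[R]_(n l)) : 'cV[R]_(n l) :=
  \col_i sigma i (v i 0).

Fixpoint acts (x : 'cV[R]_(n 0)) (l : nat) : 'cV[R]_(n l) :=
  match l with
  | 0 => x
  | l'.+1 => act (W l'.+1 *m acts x l')
  end.

(* z^{(l)}(x) = W^{(l)} a^{(l-1)}(x) for l >= 1 (z 0 is unused) *)
Definition preact (x : 'cV[R]_(n 0)) (l : nat) : 'cV[R]_(n l) :=
  match l with
  | 0 => x
  | l'.+1 => W l'.+1 *m acts x l'
  end.

Variables (d : forall l, 'I_(n l) -> R) (beta : forall l, 'I_(n l) -> R) (L : nat).

Definition Dmat (l : nat) : 'M[R]_(n l) := diag_mx (\row_i d i).

Definition Dpmat (l : nat) : 'M[R]_(n l) :=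
  if l == L then 1%:M else diag_mx (\row_i (beta i - d i)).

(* prodDW j k = D^{(k+j)} W^{(k+j)} ... D^{(j+1)} W^{(j+1)}  (identity if k = 0) *)
Fixpoint prodDW (j k : nat) : 'M[R]_(n (k + j), n j) :=
  match k with
  | 0 => 1%:M
  | k'.+1 => Dmat (k'.+1 + j) *m W (k'.+1 + j) *m prodDW j k'
  end.

(* Tmat j k = D'^{(l)} W^{(l)} prod_{i=j+1}^{l-1} D^{(i)} W^{(i)}  with l = k+1+j *)
Definition Tmat (j k : nat) : 'M[R]_(n (k.+1 + j), n j) :=
  Dpmat (k.+1 + j) *m W (k.+1 + j) *m prodDW j k.

Definition yout (x : 'cV[R]_(n 0)) (l : nat) : 'cV[R]_(n l) :=
  Dpmat l *m preact x l.

End Defs.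

From mathcomp Require Import all_boot all_order all_algebra.
From mathcomp Require Import all_classical all_reals all_analysis.
From mathcomp Require Import ring lra zify.
Import Order.TTheory GRing.Theory Num.Theory.
Set Implicit Arguments. Unset Strict Implicit. Unset Printing Implicit Defensive.
Local Open Scope ring_scope.

(* Write r^(0) = x and r^(j) = a^(j) - D^(j) z^(j) for j >= 1.  Since
   a^(l) = D^(l) W^(l) a^(l-1) + r^(l), unrolling the recursion gives
   y^(l) = sum_(j < l) T^(l,j) r^(j) with T^(l,j) the matrices whose norms
   appear in m^(l).  Coordinatewise r^(j)_i = sigma_i(z_i) - d_i z_i has slopes in
   [alpha_i - d_i, beta_i - d_i], contained in [-(beta_i - d_i), beta_i - d_i] as
   d_i <= (alpha_i + beta_i)/2, so r^(j) moves at most as much as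
   y^(j) = D'^(j) z^(j) in every coordinate, hence in l_p.  Strong induction on l,
   the triangle inequality and the operator-norm bound then give the recursion
   defining m^(l). *)

Section LpNormBasics.
Variable R : realType.

Definition cV_seq k (v : 'cV[R]_k) : nat -> R :=
  fun i => if insub i is Some j then v j 0 else 0.

Lemma cV_seqD k (u v : 'cV[R]_k) : cV_seq (u + v) = cV_seq u \+ cV_seq v.
Proof.
apply/funext => i; rewrite /cV_seq /=; case: insub => [j|]; last by rewrite addr0.
by rewrite mxE.
Qed.

Lemma Lnorm_counting_cV_seq (r : R) k (v : 'cV[R]_k) : 0 < r ->
  'N[counting]_(r%:E)[EFin \o cV_seq v]%E = (lpnorm r%:E v)%:E.
Proof.
move=> r_gt0; rewrite Lnorm_counting //.
rewrite (nneseries_split 0 k); last by move=> i _; rewrite poweR_ge0.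
rewrite add0n eseries0 ?adde0; last first.
  move=> i ki _ /=; rewrite /cV_seq insubF ?ltnNge ?ki //=.
  by rewrite normr0 powR0 ?gt_eqF.
rewrite big_mkord.
under eq_bigr => i _ do rewrite /= /cV_seq valK /=.
by rewrite sumEFin poweR_EFin.
Qed.

(* Minkowski's inequality for the counting measure, via zero-extension to nat. *)
Lemma lpnormD_le_fin (r : R) k (u v : 'cV[R]_k) : 1 <= r ->
  lpnorm r%:E (u + v) <= lpnorm r%:E u + lpnorm r%:E v.
Proof.
move=> r_ge1; have r_gt0 : 0 < r by rewrite (lt_le_trans _ r_ge1).
have mf (w : 'cV[R]_k) : measurable_fun setT (cV_seq w) by [].
have := eminkowski counting (mf u) (mf v) (p := r%:E) r_ge1.
by rewrite -cV_seqD !Lnorm_counting_cV_seq // -EFinD lee_fin.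
Qed.

Lemma powRK (r x : R) : 0 < r -> 0 <= x -> (x `^ r) `^ r^-1 = x.
Proof. by move=> r_gt0 x_ge0; rewrite -powRrM mulfV ?gt_eqF // powRr1. Qed.

Lemma lpnorm_ge0 (p : \bar R) k (v : 'cV[R]_k) : 0 <= lpnorm p v.
Proof.
case: p => [r||] //=; first exact: powR_ge0.
by elim/big_ind: _ => // x y ? ?; rewrite le_max; apply/orP; left.
Qed.

End LpNormBasics.

Section LpNorm.
Variables (R : realType) (p : \bar R).
Hypothesis p_ge1 : (1 <= p)%E.

Lemma ler_coord_lpnorm k (v : 'cV[R]_k) i : `|v i 0| <= lpnorm p v.
Proof.
case: p p_ge1 => [r | _ | //] /=; last exact: (le_bigmax _ (fun i => `|v i 0|)).
rewrite lee_fin => r_ge1; have r_gt0 : 0 < r by rewrite (lt_le_trans _ r_ge1).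
rewrite -{1}(powRK r_gt0 (normr_ge0 (v i 0))).
apply: (@ge0_ler_powR _ r^-1).
- by rewrite invr_ge0 ltW.
- by rewrite nnegrE powR_ge0.
- by rewrite nnegrE sumr_ge0 // => j _; rewrite powR_ge0.
- by rewrite (bigD1 i) //= lerDl sumr_ge0 // => j _; rewrite powR_ge0.
Qed.

Lemma ler_lpnorm k (u v : 'cV[R]_k) :
  (forall i, `|u i 0| <= `|v i 0|) -> lpnorm p u <= lpnorm p v.
Proof.
move=> uv; case: p p_ge1 => [r | _ | //] /=.
- rewrite lee_fin => r_ge1; have r_gt0 : 0 < r by rewrite (lt_le_trans _ r_ge1).
  apply: (@ge0_ler_powR _ r^-1).
  + by rewrite invr_ge0 ltW.
  + by rewrite nnegrE sumr_ge0 // => j _; rewrite powR_ge0.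
  + by rewrite nnegrE sumr_ge0 // => j _; rewrite powR_ge0.
  + by apply: ler_sum => i _; apply: (@ge0_ler_powR _ r) => //; exact: ltW.
- apply: bigmax_le => [|i _]; first exact: (lpnorm_ge0 +oo%E).
  exact: le_trans (uv i) (le_bigmax _ (fun i => `|v i 0|) _).
Qed.

Lemma lpnormZ_le k c (v : 'cV[R]_k) : lpnorm p (c *: v) <= `|c| * lpnorm p v.
Proof.
case: p p_ge1 => [r | _ | //] /=.
- rewrite lee_fin => r_ge1; have r_gt0 : 0 < r by rewrite (lt_le_trans _ r_ge1).
  under eq_bigr => i _ do rewrite mxE normrM powRM //.
  by rewrite -mulr_sumr powRM ?powRK ?powR_ge0 ?sumr_ge0.
- apply: bigmax_le => [|i _]; first by rewrite mulr_ge0 // (lpnorm_ge0 +oo%E).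
  rewrite mxE normrM ler_wpM2l //.
  exact: (le_bigmax _ (fun i => `|v i 0|)).
Qed.

Lemma lpnormD_le k (u v : 'cV[R]_k) : lpnorm p (u + v) <= lpnorm p u + lpnorm p v.
Proof.
case: p p_ge1 => [r | _ | //]; first by rewrite lee_fin; exact: lpnormD_le_fin.
apply: bigmax_le => [|i _]; first by rewrite addr_ge0 // (lpnorm_ge0 +oo%E).
rewrite mxE (le_trans (ler_normD _ _)) // lerD //;
  exact: (le_bigmax _ (fun i => `|_ i 0|)).
Qed.

Lemma lpnorm0 k : lpnorm p (0 : 'cV[R]_k) = 0.
Proof.
apply/eqP; rewrite eq_le lpnorm_ge0 andbT -(scale0r (0 : 'cV[R]_k)).
by rewrite (le_trans (lpnormZ_le _ _)) // normr0 mul0r.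
Qed.

Lemma lpnorm_sum_le k (I : Type) (r : seq I) (P : pred I) (F : I -> 'cV[R]_k) :
  lpnorm p (\sum_(i <- r | P i) F i) <= \sum_(i <- r | P i) lpnorm p (F i).
Proof.
elim/big_rec2: _ => [|i y1 y2 _ IH]; first by rewrite lpnorm0.
by apply: (le_trans (lpnormD_le _ _)); rewrite lerD2l.
Qed.

Lemma opnorm_has_sup a b (A : 'M[R]_(a, b)) :
  has_sup [set lpnorm p (A *m v) | v in [set v : 'cV[R]_b | lpnorm p v <= 1]].
Proof.
split; first by exists (lpnorm p (A *m 0)), 0 => //=; rewrite lpnorm0.
exists (lpnorm p (\col_k (\sum_i `|A k i|) : 'cV[R]_a)).
move=> _ [v /= v_le1 <-]; apply: ler_lpnorm => k.
rewrite !mxE [X in _ <= X]ger0_norm ?sumr_ge0 //.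
apply: (le_trans (ler_norm_sum _ _ _)); apply: ler_sum => i _.
rewrite normrM -{2}(mulr1 `|A k i|) ler_wpM2l //.
exact: le_trans (ler_coord_lpnorm _ _) v_le1.
Qed.

Lemma opnorm_ge0 a b (A : 'M[R]_(a, b)) : 0 <= opnorm p A.
Proof.
apply: sup_upper_bound; first exact: opnorm_has_sup.
by exists 0; rewrite /= ?mulmx0 lpnorm0.
Qed.

Lemma lpnorm_mulmx_le a b (A : 'M[R]_(a, b)) (v : 'cV[R]_b) :
  lpnorm p (A *m v) <= opnorm p A * lpnorm p v.
Proof.
have [v0|v_neq0] := eqVneq (lpnorm p v) 0.
  suff -> : v = 0 by rewrite mulmx0 !lpnorm0 mulr0.
  apply/matrixP => i j; rewrite ord1 mxE; apply/normr0_eq0/eqP.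
  by rewrite eq_le normr_ge0 andbT -v0 ler_coord_lpnorm.
set c := lpnorm p v in v_neq0 *.
have c_gt0 : 0 < c by rewrite lt_neqAle eq_sym v_neq0 lpnorm_ge0.
have unit_v : lpnorm p (c^-1 *: v) <= 1.
  by rewrite (le_trans (lpnormZ_le _ _)) // ger0_norm ?invr_ge0 ?(ltW c_gt0) // mulVf.
have -> : A *m v = c *: (A *m (c^-1 *: v)).
  by rewrite scalemxAr scalerA mulfV // scale1r.
rewrite (le_trans (lpnormZ_le _ _)) // ger0_norm ?(ltW c_gt0) //.
rewrite mulrC ler_wpM2r ?(ltW c_gt0) //.
by apply: sup_upper_bound; [exact: opnorm_has_sup | exists (c^-1 *: v)].
Qed.

End LpNorm.

Lemma slope_restricted_shift (R : realType) (s : R -> R) (al be dd a b : R) :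
  slope_restricted s al be -> dd <= (al + be) / 2 ->
  `|(s a - dd * a) - (s b - dd * b)| <= (be - dd) * `|a - b|.
Proof.
move=> s_slope dd_le; have [->|a_neq_b] := eqVneq a b.
  by rewrite !subrr normr0 mulr0.
have /andP[q_ge q_le] := s_slope a b a_neq_b.
set q := (s a - s b) / (a - b) in q_ge q_le.
have -> : (s a - dd * a) - (s b - dd * b) = (q - dd) * (a - b).
  by rewrite /q mulrBl divfK ?subr_eq0 //; ring.
rewrite normrM ler_wpM2r // ler_norml; apply/andP; split; lra.
Qed.

Section Network.
Variables (R : realType) (n : nat -> nat) (W : forall l, 'M[R]_(n l, n l.-1))
  (sigma : forall l, 'I_(n l) -> R -> R) (d beta : forall l, 'I_(n l) -> R) (L : nat).

Definition resid (x : 'cV[R]_(n 0)) (j : nat) : 'cV[R]_(n j) :=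
  match j with
  | 0 => x
  | j'.+1 => acts W sigma x j'.+1 - Dmat d j'.+1 *m preact W sigma x j'.+1
  end.

(* prodDW indexed by its target layer i; for i < j the junk value is 0. *)
Definition DWprod (i j : nat) : 'M[R]_(n i, n j) := conform_mx 0 (prodDW W d j (i - j)).

Lemma DWprodE k j : DWprod (k + j) j = prodDW W d j k.
Proof. by rewrite /DWprod addnK conform_mx_id. Qed.

Lemma DWprodS i j : (j <= i)%N -> DWprod i.+1 j = Dmat d i.+1 *m W i.+1 *m DWprod i j.
Proof.
by move/subnK <-; rewrite DWprodE; exact: (DWprodE _.+1 j).
Qed.

Lemma acts_sum_resid x i : acts W sigma x i = \sum_(j < i.+1) DWprod i j *m resid x j.
Proof.
elim: i => [|i IH]; first by rewrite big_ord1 (DWprodE 0) mul1mx.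
rewrite big_ord_recr /= (DWprodE 0) mul1mx.
under eq_bigr => j _ do rewrite DWprodS -1?ltnS // -!mulmxA.
by rewrite -!mulmx_sumr -IH addrC subrK.
Qed.

Lemma youtSB x x' l : yout W sigma d beta L x l.+1 - yout W sigma d beta L x' l.+1 =
  \sum_(j < l.+1) (Dpmat d beta L l.+1 *m W l.+1 *m DWprod l j) *m (resid x j - resid x' j).
Proof.
rewrite /yout /= -!mulmxBr !acts_sum_resid -sumrB !mulmx_sumr.
by apply: eq_bigr => j _; rewrite -!mulmxA -mulmxBr.
Qed.

Lemma opnorm_Tmat p l j : (j <= l)%N ->
  opnorm p (Dpmat d beta L l.+1 *m W l.+1 *m DWprod l j) =
  opnorm p (Tmat W d beta L j (l.+1 - j).-1).
Proof. by move/subnK <-; rewrite subSn ?leq_addl // addnK DWprodE. Qed.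

Lemma lpnorm_youtSB_le p x x' l : (1 <= p)%E ->
  lpnorm p (yout W sigma d beta L x l.+1 - yout W sigma d beta L x' l.+1) <=
  \sum_(j < l.+1) opnorm p (Tmat W d beta L j (l.+1 - j).-1) *
                  lpnorm p (resid x j - resid x' j).
Proof.
move=> p_ge1; rewrite youtSB; apply: le_trans (lpnorm_sum_le _ _ _ _) _ => //.
apply: ler_sum => j _; rewrite -(opnorm_Tmat p (ltn_ord j : (j <= l)%N)).
exact: lpnorm_mulmx_le.
Qed.

Variable alpha : forall l, 'I_(n l) -> R.
(* The layer argument l of sigma, alpha, beta and d is implicit here, read off from i. *)
Hypothesis sigma_slope : forall l (i : 'I_(n l)), (1 <= l <= L.-1)%N ->
  slope_restricted (sigma i) (alpha i) (beta i).
Hypothesis d_le : forall l (i : 'I_(n l)), (1 <= l <= L.-1)%N ->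
  d i <= (alpha i + beta i) / 2.

Lemma lpnorm_residB_le p x x' j : (1 <= p)%E -> (1 <= j <= L.-1)%N ->
  lpnorm p (resid x j - resid x' j) <=
  lpnorm p (yout W sigma d beta L x j - yout W sigma d beta L x' j).
Proof.
case: j => [//|j] p_ge1 j_range; apply: ler_lpnorm => // i.
have j_neq_L : (j.+1 == L) = false by apply/eqP; lia.
rewrite /yout /Dpmat j_neq_L /= /Dmat /act !mul_diag_mx !mxE -mulrBr normrM.
apply: le_trans (slope_restricted_shift _ _ (sigma_slope i j_range) (d_le i j_range)) _.
by rewrite ler_wpM2r // ler_norm.
Qed.

End Network.

Theorem theorem2 (R : realType) (p : \bar R) (L : nat) (n : nat -> nat)
  (W : forall l, 'M[R]_(n l, n l.-1))
  (sigma : forall l, 'I_(n l) -> R -> R)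
  (alpha beta d : forall l, 'I_(n l) -> R)
  (m : nat -> R) :
  (1 <= p)%E ->
  (1 <= L)%N ->
  (forall l (i : 'I_(n l)), (1 <= l <= L.-1)%N ->
     [/\ 0 <= alpha l i, alpha l i <= beta l i &
         slope_restricted (sigma l i) (alpha l i) (beta l i)]) ->
  (forall l (i : 'I_(n l)), (1 <= l <= L.-1)%N ->
     0 <= d l i <= (alpha l i + beta l i) / 2) ->
  (forall l, (1 <= l <= L)%N ->
     m l = opnorm p (Tmat W d beta L 0 l.-1)
           + \sum_(1 <= j < l) opnorm p (Tmat W d beta L j (l - j).-1) * m j) ->
  forall l, (1 <= l <= L)%N ->
  forall x x' : 'cV[R]_(n 0),
    lpnorm p (yout W sigma d beta L x l - yout W sigma d beta L x' l)
      <= m l * lpnorm p (x - x').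
Proof.
move=> p_ge1 _ h_act h_d h_m.
have sigma_slope l (i : 'I_(n l)) : (1 <= l <= L.-1)%N ->
    slope_restricted (sigma l i) (alpha l i) (beta l i).
  by move=> /(h_act l i) [].
have d_le l (i : 'I_(n l)) : (1 <= l <= L.-1)%N -> d l i <= (alpha l i + beta l i) / 2.
  by move=> /(h_d l i) /andP[].
move=> l + x x'; elim/ltn_ind: l => -[//|l] IH /andP[_ lL].
apply: le_trans (lpnorm_youtSB_le W sigma d beta L x x' l p_ge1) _.
(* The j = 0 term matches exactly, as r^(0) = x. *)
rewrite big_ord_recl h_m ?lL // mulrDl mulr_suml big_add1 big_mkord lerD //.
apply: ler_sum => j _; rewrite -mulrA ler_wpM2l ?opnorm_ge0 //.
have j_range : (1 <= j.+1 <= L.-1)%N by move: lL (ltn_ord j); lia.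
apply: le_trans (lpnorm_residB_le W sigma_slope d_le x x' p_ge1 j_range) _.
by apply: IH; move: lL (ltn_ord j); lia.
Qed.
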